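(* Let $L>0$, let $n$ be an even positive integer, $\Delta x=2L/n$, and $x_j=-L+j\Delta x$ for $0\le j\le n-1$. Let $k\ge1$ and let $\omega_1,\dots,\omega_k$ be measures $\omega_i=\sum_{j=0}^{n-1}a^i_j\,\delta_{x_j}$ with $a^i_j\ge0$. Fix $C\in[0,1]$ and define for $\varepsilon>0$ $$\delta(\varepsilon)=C+\int_\varepsilon^\infty(1-e^{\varepsilon-s})\,(\omega_1*\cdots*\omega_k)(s)\,ds,$$ and let $\widetilde\delta(\varepsilon)$ be the output of the following algorithm: with $\boldsymbol a^i=(a^i_0,\dots,a^i_{n-1})^{\mathrm T}$, compute $\boldsymbol b=D\,\mathcal F^{-1}\big(\mathcal F(D\boldsymbol a^1)\odot\cdots\odot\mathcal F(D\boldsymbol a^k)\big)$ and set $$\widetilde\delta(\varepsilon)=C+\sum_{\ell\in\{0,\dots,n-1\}:\,x_\ell>\varepsilon}\big(1-e^{\varepsilon-x_\ell}\big)\,b_\ell .$$ Let $\alpha^+(\lambda)=\sum_{i=1}^k\log\sum_{j}a^i_je^{\lambda x_j}$ and $\alpha^-(\lambda)=\sum_{i=1}^k\log\sum_j a^i_je^{-\lambda x_j}$. Then for all $\varepsilon>0$ and all $\lambda>0$, $$\big|\delta(\varepsilon)-\widetilde\delta(\varepsilon)\big|\le\big(e^{\alpha^+(\lambda)}+e^{\alpha^-(\lambda)}\big)\frac{e^{-L\lambda}}{1-e^{-2L\lambda}}.$$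
   Context: $\delta_t$ denotes the Dirac point mass at $t$; convolution of discrete measures is $\big(\sum_i a_i\delta_{t_i}\big)*\big(\sum_j b_j\delta_{u_j}\big)=\sum_{i,j}a_ib_j\delta_{t_i+u_j}$, and $\int_\varepsilon^\infty h(s)\mu(s)ds$ for a discrete measure means the sum of $h$ times the masses of the atoms in $[\varepsilon,\infty)$. $D=\begin{bmatrix}0&I_{n/2}\\ I_{n/2}&0\end{bmatrix}$; $(\mathcal F x)_k=\sum_{j=0}^{n-1}x_je^{-\mathrm i2\pi kj/n}$, $(\mathcal F^{-1}w)_k=\frac1n\sum_{j=0}^{n-1}w_je^{\mathrm i2\pi kj/n}$; $\odot$ is the entrywise product. In the paper, $\omega_i$ are privacy loss distributions of the composed mechanisms, $C=1-\prod_\ell(1-\delta_\ell(\infty))$ accounts for infinite privacy loss, and $\delta(\varepsilon)$ is the tight DP bound. *)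

From HB Require Import structures.
From mathcomp Require Import all_boot all_order all_algebra.
From mathcomp Require Import all_classical all_reals.
From mathcomp Require Import topology normedtype sequences exp trigo.
From mathcomp Require Import complex.

Set Implicit Arguments.
Unset Strict Implicit.
Unset Printing Implicit Defensive.

Import Order.TTheory GRing.Theory Num.Theory.
Local Open Scope ring_scope.

Section Defs.
Variable R : realType.

(** Discrete measures: finite lists of atoms (position t, mass a),
    representing sum_i a_i delta_{t_i}. *)
Definition dmeasure := seq (R * R).

Definition dirac0 : dmeasure := [:: (0, 1)].

Definition dconv (m1 m2 : dmeasure) : dmeasure :=
  [seq (p.1 + q.1, p.2 * q.2) | p <- m1, q <- m2].

Definition dconv_big (k : nat) (om : 'I_k -> dmeasure) : dmeasure :=
  foldr dconv dirac0 [seq om i | i <- enum 'I_k].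

Definition dint_from (eps : R) (h : R -> R) (m : dmeasure) : R :=
  \sum_(p <- m | eps <= p.1) h p.1 * p.2.

Definition grid (L : R) (n : nat) (j : nat) : R := - L + j%:R * (2 * L / n%:R).

Definition grid_measure (L : R) (n : nat) (a : 'I_n -> R) : dmeasure :=
  [seq (grid L n (nat_of_ord j), a j) | j : 'I_n <- enum 'I_n].

Definition delta_exact (L : R) (n k : nat) (a : 'I_k -> 'I_n -> R) (C eps : R) : R :=
  C + dint_from eps (fun s => 1 - expR (eps - s))
        (dconv_big (fun i => grid_measure L (a i))).

Definition cexpi (theta : R) : R[i] := Complex (cos theta) (sin theta).

Definition dft_mx (n : nat) : 'M[R[i]]_n :=
  \matrix_(p < n, j < n) cexpi (- (2 * pi * (p : nat)%:R * (j : nat)%:R / n%:R)).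

Definition idft_mx (n : nat) : 'M[R[i]]_n :=
  \matrix_(p < n, j < n)
     ((n%:R)^-1 * cexpi (2 * pi * (p : nat)%:R * (j : nat)%:R / n%:R)).

(** D = [[0, I_{n/2}], [I_{n/2}, 0]] : D_{i j} = 1 iff j = i + n/2 mod n. *)
Definition swap_mx (n : nat) : 'M[R[i]]_n :=
  \matrix_(p < n, j < n) ((j : nat) == ((p : nat) + n./2) %% n)%N%:R.

Definition ccol (n : nat) (a : 'I_n -> R) : 'cV[R[i]]_n :=
  \col_(j < n) Complex (a j) 0.

Definition fft_b (n k : nat) (a : 'I_k -> 'I_n -> R) : 'cV[R[i]]_n :=
  swap_mx n *m (idft_mx n *m
    \col_(l < n) \prod_(i < k) ((dft_mx n *m (swap_mx n *m ccol (a i))) l 0)).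

(** Output of the algorithm:
    C + sum_{l : x_l > eps} (1 - e^{eps - x_l}) b_l
    (b_l is real in exact arithmetic; we take its real part). *)
Definition delta_fft (L : R) (n k : nat) (a : 'I_k -> 'I_n -> R) (C eps : R) : R :=
  C + \sum_(l < n | eps < grid L n l)
        (1 - expR (eps - grid L n l)) * complex.Re (fft_b a l 0).

Definition alpha_plus (L : R) (n k : nat) (a : 'I_k -> 'I_n -> R) (lam : R) : R :=
  \sum_(i < k) ln (\sum_(j < n) a i j * expR (lam * grid L n j)).
Definition alpha_minus (L : R) (n k : nat) (a : 'I_k -> 'I_n -> R) (lam : R) : R :=
  \sum_(i < k) ln (\sum_(j < n) a i j * expR (- lam * grid L n j)).

End Defs.

From HB Require Import structures.
From mathcomp Require Import all_boot all_order all_algebra.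
From mathcomp Require Import all_classical all_reals.
From mathcomp Require Import topology normedtype sequences exp trigo.
From mathcomp Require Import complex.
From mathcomp Require Import ring lra zify.

(* Both bounds are sums, over index tuples t, of the mass prod_i a^i_(t_i)
   times the hockey-stick function (1 - e^(eps - s))_+ at some position s:
   for delta at the true atom s = sum_i x_(t_i), for the FFT output at that
   atom reduced modulo 2L into [-L, L), because the FFT computes the
   circular convolution and D centres the grid.  Atoms already in [-L, L)
   contribute no error; for the others both hockey-stick values lie in
   [0, 1] while 1 <= e^(lam (s - L)) + e^(-lam (s + L)).  Hence the error is
   at most e^(-L lam) times the moment generating functions of the
   convolution at lam and -lam, which factor over i into the terms of
   alpha^+ and alpha^-. *)

Set Implicit Arguments.
Unset Strict Implicit.
Unset Printing Implicit Defensive.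

Import Order.TTheory GRing.Theory Num.Theory.
Local Open Scope ring_scope.

Section ComplexExponential.
Variable R : realType.

Lemma cexpiD (x y : R) : cexpi (x + y) = cexpi x * cexpi y.
Proof. by rewrite /cexpi cosD sinD; congr Complex; rewrite addrC. Qed.

Lemma cexpi0 : cexpi (0 : R) = 1.
Proof. by rewrite /cexpi cos0 sin0. Qed.

Lemma cexpiMn (x : R) m : cexpi (x *+ m) = cexpi x ^+ m.
Proof. by elim: m => [|m IH]; rewrite ?mulr0n ?cexpi0 // mulrS cexpiD IH exprS. Qed.

Lemma cexpiN (x : R) : cexpi (- x) = (cexpi x)^-1.
Proof. by apply/esym/mulr1_eq; rewrite -cexpiD subrr cexpi0. Qed.

Lemma cexpi2pi : cexpi (pi *+ 2 : R) = 1.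
Proof. by rewrite /cexpi cos2pi sin2pi. Qed.

Lemma cexpi_neq1 (x : R) : 0 < x < pi *+ 2 -> cexpi x != 1.
Proof.
move=> x_bd; apply/eqP => /(congr1 (@complex.Re R)) /= cos_x.
have sin_gt0 : 0 < sin (x / 2).
  apply: sin_gt0_pi; case/andP: x_bd => x_gt0 x_lt.
  by rewrite divr_gt0 //= ltr_pdivrMr // mulr_natr mulr2n.
have x2 : x = (x / 2) *+ 2 by rewrite -mulr_natr divfK ?pnatr_eq0.
have := cos2Dsin2 (x / 2).
rewrite x2 cos_mulr2n mulr2n in cos_x; nra.
Qed.

Definition cexpi_root (n : nat) : R[i] := cexpi (2 * pi / n%:R).

Lemma cexpi_rootX (n m : nat) :
  cexpi_root n ^+ m = cexpi (2 * pi * m%:R / n%:R).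
Proof. by rewrite -cexpiMn -mulr_natr; congr cexpi; ring. Qed.

Lemma cexpi_root_prim (n : nat) : (0 < n)%N -> n.-primitive_root (cexpi_root n).
Proof.
move=> n_gt0; apply/andP; split => //; apply/forallP => i.
rewrite unity_rootE cexpi_rootX.
have [-> | ne] := eqVneq i.+1 n.
  by rewrite -mulrA divff ?pnatr_eq0 -?lt0n // mulr1 mulr_natl cexpi2pi eqxx.
rewrite eqbF_neg; apply: cexpi_neq1.
have pi_gt0 := @pi_gt0 R.
have lt_in : (i.+1%:R : R) < n%:R by rewrite ltr_nat ltn_neqAle ne ltn_ord.
rewrite divr_gt0 ?mulr_gt0 ?ltr0n //= ltr_pdivrMr ?ltr0n // -mulr_natr; nra.
Qed.

End ComplexExponential.

Lemma sum_expr_unity_root (F : idomainType) (z : F) n : z ^+ n = 1 ->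
  \sum_(p < n) z ^+ p = if z == 1 then n%:R else 0.
Proof.
move=> zn1; have [-> | z_neq1] := eqVneq z 1.
  by rewrite (eq_bigr (fun _ => 1)) ?sumr_const ?card_ord // => p _; rewrite expr1n.
have /eqP := subrX1 z n; rewrite zn1 subrr eq_sym mulf_eq0 subr_eq0.
by rewrite (negPf z_neq1) => /eqP.
Qed.

Section DiscreteFourierTransform.
Variables (R : realType) (n : nat).
Hypothesis n_gt0 : (0 < n)%N.
Local Notation w := (cexpi_root R n).

Lemma dft_mxE (p j : 'I_n) : dft_mx R n p j = w ^- (p * j).
Proof. by rewrite mxE cexpi_rootX natrM mulrA cexpiN. Qed.

Lemma idft_mxE (p j : 'I_n) : idft_mx R n p j = n%:R^-1 * w ^+ (p * j).
Proof. by rewrite mxE cexpi_rootX natrM mulrA. Qed.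

Lemma dft_orthogonality (l s : nat) :
  n%:R^-1 * \sum_(p < n) w ^+ (p * l) * w ^- (p * s) = (l == s %[mod n])%:R.
Proof.
have w_prim := cexpi_root_prim R n_gt0.
have ws_neq0 : w ^+ s != 0 by rewrite expf_neq0 // (prim_root_eq0 w_prim) -lt0n.
set z := w ^+ l / w ^+ s.
have zn1 : z ^+ n = 1.
  rewrite /z exprMn exprVn -!exprM !(mulnC _ n) !exprM.
  by rewrite (prim_expr_order w_prim) !expr1n divr1.
have z1 : (z == 1) = (l == s %[mod n]).
  by rewrite -(eq_prim_root_expr w_prim) -(inj_eq (mulIf ws_neq0)) divfK // mul1r.
under eq_bigr => p _ do rewrite !(mulnC p) !exprM -exprVn -exprMn.
rewrite sum_expr_unity_root // z1; case: eqP => _; last by rewrite mulr0.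
by rewrite mulVf // pnatr_eq0 -lt0n.
Qed.

Lemma idft_prod_dft k (v : 'I_k -> 'cV[R[i]]_n) (l : 'I_n) :
  (idft_mx R n *m \col_q \prod_(i < k) (dft_mx R n *m v i) q 0) l 0 =
  \sum_(t : {ffun 'I_k -> 'I_n} | l == \sum_(i < k) t i %[mod n])
    \prod_(i < k) v i (t i) 0.
Proof.
rewrite mxE [RHS]big_mkcond /=.
under eq_bigr => p _.
  rewrite idft_mxE mxE.
  under eq_bigr => i _ do rewrite mxE.
  rewrite bigA_distr_bigA big_distrr /=.
  over.
rewrite exchange_big /=; apply: eq_bigr => t _.
rewrite -mulrb -[RHS]mulr_natr -dft_orthogonality big_distrr /= mulrC big_distrl /=.
apply: eq_bigr => p _.
under eq_bigr => i _ do rewrite dft_mxE.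
by rewrite big_split /= prodfV prodrXr -big_distrr /= (mulnC l) !mulrA.
Qed.

End DiscreteFourierTransform.

Section HalfShift.
Variables (R : realType) (n : nat).
Hypotheses (n_gt0 : (0 < n)%N) (n_even : ~~ odd n).
Local Notation h := n./2.

Lemma halfDhalf : (h + h)%N = n.
Proof. by rewrite addnn even_halfK. Qed.

Definition half_shift (j : 'I_n) : 'I_n := Ordinal (ltn_pmod (j + h) n_gt0).

Lemma half_shiftK : involutive half_shift.
Proof.
by move=> j; apply: val_inj; rewrite /= modnDml -addnA halfDhalf modnDr modn_small.
Qed.

Lemma swap_mxE (v : 'cV[R[i]]_n) (l : 'I_n) :
  (swap_mx R n *m v) l 0 = v (half_shift l) 0.
Proof.
rewrite mxE (bigD1 (half_shift l)) //= mxE eqxx mul1r big1 ?addr0 // => j j_neq.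
rewrite mxE (_ : _ == _ = false) ?mul0r //.
by apply: contraNF j_neq => /eqP j_eq; apply/eqP/val_inj.
Qed.

(* The atom sum_i x_(t_i) = (sum_i t_i - k h) dx is congruent modulo
   2L = n dx to the grid point of index sum_i t_i - k h + h, which is
   congruent to sum_i t_i + (k + 1) h modulo n = 2 h. *)
Definition wrap_index k (t : {ffun 'I_k -> 'I_n}) : 'I_n :=
  Ordinal (ltn_pmod (\sum_(i < k) t i + k.+1 * h) n_gt0).

Lemma half_shift_sum_mod k (t : {ffun 'I_k -> 'I_n}) (l : 'I_n) :
  (half_shift l == \sum_(i < k) half_shift (t i) %[mod n])%N = (wrap_index t == l).
Proof.
rewrite /= modn_mod modn_summ big_split /= sum_nat_const card_ord.
rewrite -(eqn_modDr h) -addnA halfDhalf modnDr -addnA -mulSnr.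
by rewrite (modn_small (ltn_ord l)) eq_sym.
Qed.

Lemma fft_bE k (a : 'I_k -> 'I_n -> R) (l : 'I_n) :
  fft_b a l 0 =
    (\sum_(t : {ffun 'I_k -> 'I_n} | wrap_index t == l) \prod_(i < k) a i (t i))%:C%C.
Proof.
rewrite /fft_b swap_mxE idft_prod_dft // rmorph_sum /=.
pose shift_all (t : {ffun 'I_k -> 'I_n}) := [ffun i => half_shift (t i)].
have shift_allK : involutive shift_all.
  by move=> t; apply/ffunP => i; rewrite !ffunE half_shiftK.
rewrite (reindex_inj (inv_inj shift_allK)) /=.
apply: eq_big => [t | t _].
  by rewrite -half_shift_sum_mod; under eq_bigr do rewrite ffunE.
by rewrite rmorph_prod; apply: eq_bigr => i _; rewrite swap_mxE mxE ffunE half_shiftK.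
Qed.

End HalfShift.

Section DiscreteConvolution.
Variable R : realType.

Lemma sum_dconv (m1 m2 : dmeasure R) (F : R * R -> R) :
  \sum_(p <- dconv m1 m2) F p = \sum_(p <- m1) \sum_(q <- m2) F (p.1 + q.1, p.2 * q.2).
Proof. exact: big_allpairs_dep. Qed.

Lemma dconv_bigS k (om : 'I_k.+1 -> dmeasure R) :
  dconv_big om = dconv (om ord0) (dconv_big (fun i => om (lift ord0 i))).
Proof. by rewrite /dconv_big enum_ordSl /= -map_comp. Qed.

Definition ffun_cons (J : finType) k (j : J) (t : {ffun 'I_k -> J}) :
  {ffun 'I_k.+1 -> J} :=
  [ffun i => if unlift ord0 i is Some i' then t i' else j].

Lemma ffun_cons0 (J : finType) k j (t : {ffun 'I_k -> J}) : ffun_cons j t ord0 = j.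
Proof. by rewrite ffunE unlift_none. Qed.

Lemma ffun_consS (J : finType) k j (t : {ffun 'I_k -> J}) i :
  ffun_cons j t (lift ord0 i) = t i.
Proof. by rewrite ffunE liftK. Qed.

Lemma sum_ffun_recl (V : nmodType) (J : finType) k (F : {ffun 'I_k.+1 -> J} -> V) :
  \sum_t F t = \sum_(j : J) \sum_(t : {ffun 'I_k -> J}) F (ffun_cons j t).
Proof.
rewrite pair_big /= (reindex (fun u : J * {ffun 'I_k -> J} => ffun_cons u.1 u.2)) //=.
exists (fun t => (t ord0, [ffun i => t (lift ord0 i)])) => [[j t] _ | t _] /=.
  by rewrite ffun_cons0; congr pair; apply/ffunP => i; rewrite ffunE ffun_consS.
by apply/ffunP => i; rewrite ffunE; case: unliftP => [i'|] ->; rewrite ?ffunE.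
Qed.

Lemma sum_dconv_big (J : finType) k (x w : 'I_k -> J -> R) (G : R -> R) :
  \sum_(p <- dconv_big (fun i => [seq (x i j, w i j) | j <- enum J])) G p.1 * p.2 =
  \sum_(t : {ffun 'I_k -> J}) G (\sum_(i < k) x i (t i)) * \prod_(i < k) w i (t i).
Proof.
elim: k x w G => [|k IH] x w G.
  rewrite /dconv_big enum_ord0 big_seq1 /= mulr1.
  rewrite (eq_bigr (fun _ => G 0)) => [|t _]; last by rewrite !big_ord0 mulr1.
  by rewrite sumr_const card_ffun card_ord.
rewrite dconv_bigS sum_dconv big_map sum_ffun_recl big_enum /=; apply: eq_bigr => j _.
under eq_bigr => q _ do rewrite /= mulrCA.
rewrite -big_distrr /= (IH _ _ (fun s => G (x ord0 j + s))) big_distrr /=.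
apply: eq_bigr => t _; rewrite !big_ord_recl !ffun_cons0 mulrCA.
by congr (G (_ + _) * (_ * _)); apply: eq_bigr => i _; rewrite ffun_consS.
Qed.

End DiscreteConvolution.

Section ExponentialBounds.
Variable R : realType.

Definition hockey_stick (eps s : R) : R := if eps <= s then 1 - expR (eps - s) else 0.

Lemma hockey_stick_ltE eps s :
  (if eps < s then 1 - expR (eps - s) else 0) = hockey_stick eps s.
Proof.
rewrite /hockey_stick le_eqVlt; have [-> | _] //= := eqVneq eps s.
by rewrite ltxx subrr expR0 subrr.
Qed.

Lemma hockey_stick_itv eps s : 0 <= hockey_stick eps s <= 1.
Proof.
rewrite /hockey_stick; case: ifP => [eps_le | _]; last by rewrite lexx ler01.
by rewrite subr_ge0 expR_le1 subr_le0 eps_le gerDl oppr_le0 expR_ge0.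
Qed.

Lemma expR_tails_ge1 (L lam x : R) : 0 <= lam -> ~~ (- L <= x < L) ->
  1 <= expR (lam * (x - L)) + expR (- lam * (x + L)).
Proof.
move=> lam_ge0; rewrite negb_and -!ltNge -leNgt => x_out.
have e1 := expR_ge0 (lam * (x - L)); have e2 := expR_ge0 (- lam * (x + L)).
case/orP: x_out => [x_lt | L_le].
  suff : 1 <= expR (- lam * (x + L)) by lra.
  by rewrite leNgt expR_lt1 -leNgt mulNr oppr_ge0 mulr_ge0_le0 // -lerBrDr sub0r ltW.
suff : 1 <= expR (lam * (x - L)) by lra.
by rewrite leNgt expR_lt1 -leNgt mulr_ge0 // subr_ge0.
Qed.

(* Not an equality: ln 0 = 0 in the library. *)
Lemma prod_le_expR_sum_ln (I : finType) (F : I -> R) : (forall i, 0 <= F i) ->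
  \prod_i F i <= expR (\sum_i ln (F i)).
Proof.
move=> F_ge0; rewrite expR_sum; apply: ler_prod => i _; rewrite F_ge0 /=.
have [<- | F_neq0] := eqVneq 0 (F i); first exact: expR_ge0.
by rewrite lnK // posrE lt_def eq_sym F_neq0 F_ge0.
Qed.

Lemma sum_ffun_prod_expR (I J : finType) (x w : I -> J -> R) (c : R) :
  \sum_(t : {ffun I -> J}) (\prod_i w i (t i)) * expR (c * \sum_i x i (t i)) =
  \prod_i \sum_j w i j * expR (c * x i j).
Proof.
rewrite bigA_distr_bigA /=; apply: eq_bigr => t _.
by rewrite mulr_sumr expR_sum -big_split.
Qed.

End ExponentialBounds.

Section Grid.
Variables (R : realType) (L : R) (n : nat).
Hypotheses (L_gt0 : 0 < L) (n_gt0 : (0 < n)%N) (n_even : ~~ odd n).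
Local Notation h := n./2.
Local Notation dx := (2 * L / n%:R).

Lemma dx_gt0 : 0 < dx.
Proof. by rewrite divr_gt0 ?mulr_gt0 ?ltr0n. Qed.

Lemma L_halfE : L = h%:R * dx.
Proof.
rewrite -[in (n%:R)^-1](halfDhalf n_even) natrD; field.
by rewrite -natrD pnatr_eq0 (halfDhalf n_even) -lt0n.
Qed.

Lemma gridE (j : nat) : grid L n j = (j%:R - h%:R) * dx.
Proof. by rewrite /grid {1}L_halfE; ring. Qed.

Lemma sum_gridE k (t : {ffun 'I_k -> 'I_n}) :
  \sum_(i < k) grid L n (t i) = ((\sum_(i < k) t i)%:R - (k * h)%:R) * dx.
Proof.
under eq_bigr do rewrite gridE.
by rewrite -mulr_suml sumrB -natr_sum sumr_const card_ord natrM [k%:R * _]mulr_natl.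
Qed.

Lemma grid_wrap_index k (t : {ffun 'I_k -> 'I_n}) :
  - L <= \sum_(i < k) grid L n (t i) < L ->
  grid L n (wrap_index n_gt0 t) = \sum_(i < k) grid L n (t i).
Proof.
have h2 := halfDhalf n_even; set s := (\sum_(i < k) t i)%N.
move=> /andP [low high].
have {low} low : (k * h <= s + h)%N.
  move: low; rewrite sum_gridE {1}L_halfE -mulNr ler_pM2r ?dx_gt0 //.
  by rewrite lerNl opprB lerBlDr -natrD ler_nat addnC.
have {high} high : (s + h < k * h + n)%N.
  move: high; rewrite sum_gridE {2}L_halfE ltr_pM2r ?dx_gt0 //.
  by rewrite ltrBlDr -natrD ltr_nat; lia.
have wrapE : ((s + k.+1 * h) %% n = s + h - k * h)%N.
  rewrite -(modn_small (_ : s + h - k * h < n)%N); last by lia.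
  by rewrite -[RHS](modnMDl k); congr modn; nia.
by rewrite sum_gridE gridE /= wrapE natrB // natrD; congr (_ * _); ring.
Qed.

End Grid.

Section ErrorBound.
Variables (R : realType) (L : R) (n k : nat) (a : 'I_k -> 'I_n -> R) (C eps : R).
Hypotheses (L_gt0 : 0 < L) (n_gt0 : (0 < n)%N) (n_even : ~~ odd n).
Hypothesis a_ge0 : forall i j, 0 <= a i j.

Local Notation atom t := (\sum_(i < k) grid L n (t i)).
Local Notation mass t := (\prod_(i < k) a i (t i)).

Lemma delta_exactE :
  delta_exact L a C eps
    = C + \sum_(t : {ffun 'I_k -> 'I_n}) hockey_stick eps (atom t) * mass t.
Proof.
rewrite /delta_exact /dint_from big_mkcond /=.
rewrite -(sum_dconv_big (fun _ (j : 'I_n) => grid L n j) a (hockey_stick eps)).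
by congr (_ + _); apply: eq_bigr => p _; rewrite /hockey_stick; case: ifP; rewrite ?mul0r.
Qed.

Lemma delta_fftE :
  delta_fft L a C eps
    = C + \sum_(t : {ffun 'I_k -> 'I_n})
            hockey_stick eps (grid L n (wrap_index n_gt0 t)) * mass t.
Proof.
rewrite /delta_fft big_mkcond /=; congr (_ + _).
rewrite [RHS](partition_big (fun t : {ffun 'I_k -> 'I_n} => wrap_index n_gt0 t) predT) //.
apply: eq_bigr => l _.
rewrite (eq_bigr (fun t : {ffun 'I_k -> 'I_n} => hockey_stick eps (grid L n l) * mass t)).
  by rewrite -big_distrr fft_bE // -hockey_stick_ltE /=; case: ifP; rewrite ?mul0r.
by move=> t /eqP <-.
Qed.

Variable lam : R.
Hypothesis lam_ge0 : 0 <= lam.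
Local Notation tails x := (expR (lam * (x - L)) + expR (- lam * (x + L))).

Lemma hockey_stick_wrap_err (t : {ffun 'I_k -> 'I_n}) :
  `|hockey_stick eps (atom t) - hockey_stick eps (grid L n (wrap_index n_gt0 t))|
    <= tails (atom t).
Proof.
have [in_range | out_range] := boolP (- L <= atom t < L).
  by rewrite grid_wrap_index // subrr normr0 addr_ge0 ?expR_ge0.
apply: le_trans (expR_tails_ge1 lam_ge0 out_range).
have /andP [? ?] := hockey_stick_itv eps (atom t).
have /andP [? ?] := hockey_stick_itv eps (grid L n (wrap_index n_gt0 t)).
by rewrite ler_norml; apply/andP; split; lra.
Qed.

Lemma delta_err_le_tails :
  `|delta_exact L a C eps - delta_fft L a C eps|
    <= \sum_(t : {ffun 'I_k -> 'I_n}) tails (atom t) * mass t.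
Proof.
rewrite delta_exactE delta_fftE opprD addrACA subrr add0r -sumrB.
apply: le_trans (ler_norm_sum _ _ _) _; apply: ler_sum => t _.
have mass_ge0 : 0 <= mass t by apply: prodr_ge0.
by rewrite -mulrBl normrM (ger0_norm mass_ge0) ler_wpM2r // hockey_stick_wrap_err.
Qed.

Lemma sum_tails_mgf :
  \sum_(t : {ffun 'I_k -> 'I_n}) tails (atom t) * mass t =
  expR (- (L * lam)) * (\prod_i \sum_j a i j * expR (lam * grid L n j)
                       + \prod_i \sum_j a i j * expR (- lam * grid L n j)).
Proof.
rewrite -!(sum_ffun_prod_expR (fun _ (j : 'I_n) => grid L n j)).
rewrite mulrDr !big_distrr -big_split /=.
by apply: eq_bigr => t _; rewrite mulrBr mulrDr !expRD !mulNr (mulrC lam L); ring.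
Qed.

End ErrorBound.

Theorem theorem7 (R : realType) (L : R) (n k : nat)
    (a : 'I_k -> 'I_n -> R) (C : R) :
  0 < L -> (0 < n)%N -> ~~ odd n -> (1 <= k)%N ->
  (forall i j, 0 <= a i j) ->
  0 <= C <= 1 ->
  forall eps lam : R, 0 < eps -> 0 < lam ->
  `| delta_exact L a C eps - delta_fft L a C eps |
    <= (expR (alpha_plus L a lam) + expR (alpha_minus L a lam))
       * (expR (- (L * lam)) / (1 - expR (- (2 * L * lam)))).
Proof.
move=> L_gt0 n_gt0 n_even _ a_ge0 _ eps lam _ lam_gt0.
have lam_ge0 := ltW lam_gt0.
apply: le_trans (delta_err_le_tails C eps L_gt0 n_gt0 n_even a_ge0 lam_ge0) _.
rewrite sum_tails_mgf mulrC.
have mgf_ge0 c : 0 <= \prod_i \sum_j a i j * expR (c * grid L n j).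
  by apply: prodr_ge0 => i _; apply: sumr_ge0 => j _; rewrite mulr_ge0 ?expR_ge0.
have mgf_le c : \prod_i \sum_j a i j * expR (c * grid L n j)
    <= expR (\sum_i ln (\sum_j a i j * expR (c * grid L n j))).
  by apply: prod_le_expR_sum_ln => i; apply: sumr_ge0 => j _; rewrite mulr_ge0 ?expR_ge0.
have q_lt1 : expR (- (2 * L * lam)) < 1 by rewrite expR_lt1 oppr_lt0 !mulr_gt0.
have ex_le : expR (- (L * lam)) <= expR (- (L * lam)) / (1 - expR (- (2 * L * lam))).
  by rewrite ler_pdivlMr ?subr_gt0 // ger_pMr ?expR_gt0 // gerBl expR_ge0.
apply: ler_pM; rewrite ?addr_ge0 ?mgf_ge0 ?expR_ge0 //.
exact: lerD (mgf_le lam) (mgf_le (- lam)).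
Qed.
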